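(* Let $|\xi\rangle=\sum_n\lambda_n|n\rangle\neq|0\rangle$ be a normalized single-mode pure state. Let $P_{\rm even}=\sum_{l\ge0}|2l\rangle\langle2l|$ and $P_{\rm odd}=\sum_{l\ge0}|2l+1\rangle\langle2l+1|$. (i) If $\lambda_n=0$ for all odd $n$, then with the measurements $\Pi^A_0=\Pi^B_0=P_{\rm even}$, $\Pi^A_1=\Pi^B_1=P_{\rm odd}$ one has $P(0,0|0,0)=P(0,0|1,1)=P(1,1|0,1)=P(1,1|1,0)=1$, and hence $\mathcal J=1$ (the maximal value); moreover in this case the outcomes satisfy $a=b=x\oplus y$ with probability one. (ii) If $\lambda_n=0$ for all even $n$, the same conclusion $\mathcal J=1$ holds with $\Pi^A_0=P_{\rm odd}$, $\Pi^A_1=P_{\rm even}$, $\Pi^B_0=P_{\rm even}$, $\Pi^B_1=P_{\rm odd}$. In particular $\mathcal J=1$ for the even-coherent state $|\xi\rangle\propto|\alpha\rangle+|-\alpha\rangle$ ($\alpha\neq0$), the odd-coherent state $|\xi\rangle\propto|\alpha\rangle-|-\alpha\rangle$ ($\alpha\ne0$), and the squeezed vacuum $|\xi\rangle=\exp[\tfrac12(\zeta^*a^2-\zeta a^{\dagger2})]|0\rangle$ ($\zeta\neq0$).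
   Context: Modes $A$ and $B$ have annihilation operators $a,b$ and Fock states $|n\rangle$; $|\alpha\rangle$ denotes a coherent state $e^{-|\alpha|^2/2}\sum_n\frac{\alpha^n}{\sqrt{n!}}|n\rangle$. For a normalized single-mode state $|\xi\rangle=\sum_n\lambda_n|n\rangle$ with $|\lambda_0|<1$ and input bits $x,y\in\{0,1\}$, the phase-encoded generalized NOON state is $|\Phi_{xy}\rangle=\mathcal N_{xy}^{-1/2}\big((-1)^x|\xi\rangle_A|0\rangle_B+(-1)^y|0\rangle_A|\xi\rangle_B\big)$ with $\mathcal N_{xy}=2(1+(-1)^{x+y}|\lambda_0|^2)$. The lossless 50:50 beam splitter is the unitary $U$ with $U|0,0\rangle=|0,0\rangle$, $Ua^\dagger U^\dagger=(a^\dagger+b^\dagger)/\sqrt2$, $Ub^\dagger U^\dagger=(a^\dagger-b^\dagger)/\sqrt2$; set $|\Phi''_{xy}\rangle=U|\Phi_{xy}\rangle$. For two-outcome projective measurements $\{\Pi^A_0,\Pi^A_1\}$, $\{\Pi^B_0,\Pi^B_1\}$, $P(a,b|x,y)=\langle\Phi''_{xy}|\Pi^A_a\otimes\Pi^B_b|\Phi''_{xy}\rangle$ and $\mathcal J=\frac14\big[P(0,0|0,0)+P(0,0|1,1)+P(1,1|0,1)+P(1,1|1,0)\big]$. $\oplus$ is addition mod 2. *)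

From Stdlib Require Import Reals Lra Lia Arith Bool.
Open Scope R_scope.

Record Cpx := mkC { Cre : R ; Cim : R }.
Definition C0 : Cpx := mkC 0 0.
Definition C1 : Cpx := mkC 1 0.
Definition Cadd (z w : Cpx) : Cpx := mkC (Cre z + Cre w) (Cim z + Cim w).
Definition Copp (z : Cpx) : Cpx := mkC (- Cre z) (- Cim z).
Definition Cmul (z w : Cpx) : Cpx :=
  mkC (Cre z * Cre w - Cim z * Cim w) (Cre z * Cim w + Cim z * Cre w).
Definition RC (r : R) : Cpx := mkC r 0.
Definition Cscale (r : R) (z : Cpx) : Cpx := mkC (r * Cre z) (r * Cim z).
Fixpoint Cpow (z : Cpx) (n : nat) : Cpx :=
  match n with O => C1 | S n' => Cmul z (Cpow z n') end.
Definition Cnorm2 (z : Cpx) : R := Cre z * Cre z + Cim z * Cim z.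
Definition Cabs (z : Cpx) : R := sqrt (Cnorm2 z).

(** * Single-mode states in the Fock basis: lam n = <n|xi> *)
Definition normalized (lam : nat -> Cpx) : Prop :=
  infinite_sum (fun n => Cnorm2 (lam n)) 1.

Definition sgn (b : bool) : R := if b then -1 else 1.

Definition Nxy (lam : nat -> Cpx) (x y : bool) : R :=
  2 * (1 + sgn (xorb x y) * Cnorm2 (lam 0%nat)).

(** Two-mode state |Phi_xy> in the Fock basis: Phi p q = <p,q|Phi_xy> *)
Definition Phi (lam : nat -> Cpx) (x y : bool) (p q : nat) : Cpx :=
  Cscale (/ sqrt (Nxy lam x y))
    (Cadd (Cscale (sgn x) (if Nat.eqb q 0 then lam p else C0))
          (Cscale (sgn y) (if Nat.eqb p 0 then lam q else C0))).

(** Matrix elements <r,s|U|p,q> of the 50:50 beam splitter determined by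
    U|0,0> = |0,0>, U a^+ U^+ = (a^+ + b^+)/sqrt2, U b^+ U^+ = (a^+ - b^+)/sqrt2:
    U|p,q> = (p! q!)^{-1/2} ((a^+ + b^+)/sqrt2)^p ((a^+ - b^+)/sqrt2)^q |0,0>
           = 2^{-(p+q)/2} (p!q!)^{-1/2}
             sum_{i<=p, j<=q} C(p,i) C(q,j) (-1)^(q-j) sqrt((i+j)! (p+q-i-j)!) |i+j, p+q-i-j>. *)
Definition bs (r s p q : nat) : R :=
  if Nat.eqb (r + s) (p + q) then
    (/ sqrt 2) ^ (p + q)
    * sqrt (INR (fact r * fact s) / INR (fact p * fact q))
    * sum_f_R0 (fun i => if (Nat.leb i p && Nat.leb (r - i) q)%bool
                         then Binomial.C p i * Binomial.C q (r - i)
                              * (-1) ^ (q - (r - i))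
                         else 0) r
  else 0.

(** |Phi''_xy> = U |Phi_xy>; U conserves total photon number, so the
    matrix product is the finite sum over p + q = r + s. *)
Definition Phi2 (lam : nat -> Cpx) (x y : bool) (r s : nat) : Cpx :=
  let n := (r + s)%nat in
  let fix go (k : nat) : Cpx :=
    match k with
    | O => Cscale (bs r s 0 n) (Phi lam x y 0 n)
    | S k' => Cadd (go k') (Cscale (bs r s k (n - k)) (Phi lam x y k (n - k)))
    end in
  go n.

(** A two-outcome projective measurement diagonal in the Fock basis:
    meas a n = true iff |n><n| is a summand of Pi_a. *)
Definition fock_meas := bool -> nat -> bool.

Definition P_even : nat -> bool := fun n => Nat.even n.
Definition P_odd  : nat -> bool := fun n => Nat.odd n.

Definition meas_even_odd : fock_meas := fun a => if a then P_odd else P_even.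
Definition meas_odd_even : fock_meas := fun a => if a then P_even else P_odd.

(** prob lam MA MB a b x y p  :<->  P(a,b|x,y) = p, where
    P(a,b|x,y) = <Phi''_xy| Pi^A_a (x) Pi^B_b |Phi''_xy>
               = sum_{k,m} [k in Pi^A_a][m in Pi^B_b] |<k,m|Phi''_xy>|^2,
    the (nonnegative) double series being summed along diagonals k + m = n. *)
Definition prob (lam : nat -> Cpx) (MA MB : fock_meas) (a b x y : bool) (p : R) : Prop :=
  infinite_sum
    (fun n => sum_f_R0 (fun k => if (MA a k && MB b (n - k)%nat)%bool
                                 then Cnorm2 (Phi2 lam x y k (n - k)%nat) else 0) n)
    p.

Definition J_value (lam : nat -> Cpx) (MA MB : fock_meas) (j : R) : Prop :=
  exists p1 p2 p3 p4 : R,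
    prob lam MA MB false false false false p1 /\
    prob lam MA MB false false true true p2 /\
    prob lam MA MB true true false true p3 /\
    prob lam MA MB true true true false p4 /\
    j = (p1 + p2 + p3 + p4) / 4.

Definition coh (alpha : Cpx) (n : nat) : Cpx :=
  Cscale (exp (- Cnorm2 alpha / 2) / sqrt (INR (fact n))) (Cpow alpha n).

(** squeezed vacuum exp[(zeta^* a^2 - zeta a^{+2})/2]|0>, zeta = r e^{i theta}, in its
    Fock expansion: <2l|xi> = (cosh r)^{-1/2} (-e^{i theta} tanh r)^l sqrt((2l)!)/(2^l l!),
    <2l+1|xi> = 0. *)
Definition sqz (zeta : Cpx) (n : nat) : Cpx :=
  let r := Cabs zeta in
  let w := Cscale (- tanh r / r) zeta in
  if Nat.even n then
    Cscale (/ sqrt (cosh r) * sqrt (INR (fact n))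
            / (2 ^ Nat.div2 n * INR (fact (Nat.div2 n))))
           (Cpow w (Nat.div2 n))
  else C0.

(* Only the components |n,0> and |0,n> of |Phi_xy> are populated, so the beam splitter keeps
   each photon number n separate, and the amplitude on |r,s> is
   sqrt (C(n,r) / 2^n) ((-1)^x + (-1)^(y+s)) lam_n / sqrt N_xy, which vanishes exactly when
   (-1)^s = -(-1)^(x+y).  If xi has only even (odd) photon numbers, r and s have equal
   (opposite) parities, so every outcome other than a = b = x xor y has amplitude zero; the
   remaining outcome then carries the whole norm, which is 1 by the binomial theorem.
   For the squeezed vacuum, normalization reduces to sum_l C(2l,l)/4^l t^l = (1-t)^(-1/2),
   whose square is the geometric series because sum_k C(2k,k) C(2n-2k,n-k) = 4^n. *)

From Stdlib Require Import Reals Bool Lra Lia Arith.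
From Coquelicot Require Import Hierarchy Series.
Open Scope R_scope.

Lemma Cpx_ext (z w : Cpx) : Cre z = Cre w -> Cim z = Cim w -> z = w.
Proof. destruct z, w; simpl; intros; subst; reflexivity. Qed.

Lemma Cnorm2_ge0 (z : Cpx) : 0 <= Cnorm2 z.
Proof. unfold Cnorm2. nra. Qed.

Lemma Cnorm2_gt0 (z : Cpx) : z <> C0 -> 0 < Cnorm2 z.
Proof.
  destruct z as [u v]; unfold Cnorm2; simpl; intros Hz.
  destruct (Req_dec u 0), (Req_dec v 0); subst; try nra.
  now contradiction Hz.
Qed.

Lemma Cnorm2_C0 : Cnorm2 C0 = 0.
Proof. unfold Cnorm2; simpl; ring. Qed.

Lemma Cnorm2_scale (a : R) (z : Cpx) : Cnorm2 (Cscale a z) = a * a * Cnorm2 z.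
Proof. unfold Cnorm2; simpl; ring. Qed.

Lemma Cnorm2_mul (z w : Cpx) : Cnorm2 (Cmul z w) = Cnorm2 z * Cnorm2 w.
Proof. unfold Cnorm2; simpl; ring. Qed.

Lemma Cnorm2_pow (z : Cpx) (n : nat) : Cnorm2 (Cpow z n) = Cnorm2 z ^ n.
Proof.
  induction n as [|n IH]; simpl.
  - unfold Cnorm2; simpl; ring.
  - now rewrite Cnorm2_mul, IH.
Qed.

Lemma Cnorm2_opp (z : Cpx) : Cnorm2 (Copp z) = Cnorm2 z.
Proof. unfold Cnorm2; simpl; ring. Qed.

Lemma Cscale_0 (z : Cpx) : Cscale 0 z = C0.
Proof. apply Cpx_ext; simpl; ring. Qed.

Lemma Cpow_opp (z : Cpx) (n : nat) : Cpow (Copp z) n = Cscale ((-1) ^ n) (Cpow z n).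
Proof.
  induction n as [|n IH]; simpl; [|rewrite IH]; apply Cpx_ext; simpl; ring.
Qed.

Lemma sum_f_R0_single (f : nat -> R) (m n : nat) : (m <= n)%nat ->
  (forall i, (i <= n)%nat -> i <> m -> f i = 0) -> sum_f_R0 f n = f m.
Proof.
  induction n as [|n IH]; intros Hm Hf.
  - now replace m with 0%nat by lia.
  - rewrite tech5. destruct (Nat.eq_dec m (S n)) as [->|Hne].
    + rewrite sum_eq_R0; [ring|]. intros i Hi. apply Hf; lia.
    + rewrite (Hf (S n)), IH by (lia || intros i Hi; apply Hf; lia). ring.
Qed.

Lemma sum_f_R0_rev (f : nat -> R) (n : nat) :
  sum_f_R0 f n = sum_f_R0 (fun k => f (n - k)%nat) n.
Proof.
  revert f. induction n as [|n IH]; intros f; [reflexivity|].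
  rewrite decomp_sum by lia. simpl pred. rewrite (IH (fun i => f (S i))), tech5.
  rewrite Nat.sub_diag, Rplus_comm. f_equal. apply sum_eq. intros i Hi. f_equal. lia.
Qed.

Lemma infinite_sum_partial_le (f : nat -> R) (l : R) (n : nat) :
  (forall k, 0 <= f k) -> infinite_sum f l -> sum_f_R0 f n <= l.
Proof.
  intros Hf Hl. apply growing_ineq; [|exact Hl].
  intros k. simpl. specialize (Hf (S k)). lra.
Qed.

Lemma sgn_xorb (x y : bool) : sgn (xorb x y) = sgn x * sgn y.
Proof. destruct x, y; simpl; ring. Qed.

Lemma pow_m1_parity (m : nat) : (-1) ^ m = if Nat.even m then 1 else -1.
Proof.
  induction m as [|m IH]; [reflexivity|]. simpl pow.
  rewrite Nat.even_succ, <- Nat.negb_even, IH. destruct (Nat.even m); simpl; ring.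
Qed.

Lemma sgn_interference_sq (x y : bool) (s : nat) :
  (sgn x + sgn y * (-1) ^ s) * (sgn x + sgn y * (-1) ^ s)
  = 2 * (1 + sgn (xorb x y) * (-1) ^ s).
Proof. rewrite sgn_xorb, pow_m1_parity. destruct x, y, (Nat.even s); simpl; ring. Qed.

Lemma sgn_interference_dark (x y : bool) (s : nat) :
  Nat.even s = xorb x y -> sgn x + sgn y * (-1) ^ s = 0.
Proof. rewrite pow_m1_parity. intros ->. destruct x, y; simpl; ring. Qed.

Lemma Nxy_pos (lam : nat -> Cpx) (x y : bool) : Cnorm2 (lam 0%nat) < 1 -> 0 < Nxy lam x y.
Proof.
  intros H. pose proof (Cnorm2_ge0 (lam 0%nat)). unfold Nxy.
  destruct (xorb x y); simpl; lra.
Qed.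

Definition kron (i j : nat) : R := if Nat.eqb i j then 1 else 0.

Definition bs_amp (r s : nat) : R :=
  (/ sqrt 2) ^ (r + s) * sqrt (INR (fact r * fact s) / INR (fact (r + s))).

Lemma bs_n0 (r s : nat) : bs r s (r + s) 0 = bs_amp r s * Binomial.C (r + s) r.
Proof.
  unfold bs, bs_amp. rewrite Nat.add_0_r, Nat.eqb_refl, Nat.mul_1_r.
  rewrite (sum_f_R0_single _ r r); [| lia | intros i Hir Hi;
    replace (Nat.leb (r - i) 0) with false by (symmetry; apply Nat.leb_gt; lia);
    now rewrite andb_false_r].
  rewrite Nat.sub_diag. replace (Nat.leb r (r + s)) with true by (symmetry; apply Nat.leb_le; lia).
  unfold Binomial.C at 2. simpl. field.
Qed.

Lemma bs_0n (r s : nat) :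
  bs r s 0 (r + s) = bs_amp r s * Binomial.C (r + s) r * (-1) ^ s.
Proof.
  unfold bs, bs_amp. rewrite Nat.add_0_l, Nat.eqb_refl, Nat.mul_1_l.
  rewrite (sum_f_R0_single _ 0 r); [| lia | intros [|i] _ Hi; [lia|reflexivity]].
  rewrite Nat.sub_0_r. replace (Nat.leb r (r + s)) with true by (symmetry; apply Nat.leb_le; lia).
  replace (r + s - r)%nat with s by lia. unfold Binomial.C at 1. simpl. field.
Qed.

Lemma bs_amp_binom_sq (r s : nat) :
  (bs_amp r s * Binomial.C (r + s) r) * (bs_amp r s * Binomial.C (r + s) r)
  = Binomial.C (r + s) r / 2 ^ (r + s).
Proof.
  unfold bs_amp, Binomial.C. replace (r + s - r)%nat with s by lia.
  pose proof (INR_fact_neq_0 r). pose proof (INR_fact_neq_0 s).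
  pose proof (lt_0_INR _ (lt_O_fact (r + s))).
  set (q := INR (fact r * fact s) / INR (fact (r + s))).
  assert (Hq : sqrt q * sqrt q = q).
  { apply sqrt_sqrt. unfold q. apply Rmult_le_pos; [apply pos_INR|].
    left. now apply Rinv_0_lt_compat. }
  assert (H2 : / sqrt 2 * / sqrt 2 = / 2) by (rewrite <- Rinv_mult, sqrt_sqrt; lra).
  transitivity ((/ sqrt 2 * / sqrt 2) ^ (r + s) * (sqrt q * sqrt q)
     * (INR (fact (r + s)) / (INR (fact r) * INR (fact s)))
     * (INR (fact (r + s)) / (INR (fact r) * INR (fact s)))).
  { rewrite Rpow_mult_distr. ring. }
  rewrite H2, Hq, pow_inv. unfold q. rewrite mult_INR. field.
  repeat split; try lra. apply pow_nonzero; lra.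
Qed.

(* Written with an inner [fix], exactly as in [Phi2], so that [Phi2] is convertible to it. *)
Definition bs_partial (lam : nat -> Cpx) (x y : bool) (r s n : nat) : nat -> Cpx :=
  fix go (k : nat) : Cpx :=
  match k with
  | O => Cscale (bs r s 0 n) (Phi lam x y 0 n)
  | S k' => Cadd (go k') (Cscale (bs r s k (n - k)) (Phi lam x y k (n - k)))
  end.

Lemma Phi2_bs_partial (lam : nat -> Cpx) (x y : bool) (r s : nat) :
  Phi2 lam x y r s = bs_partial lam x y r s (r + s) (r + s).
Proof. reflexivity. Qed.

Lemma Phi_diag (lam : nat -> Cpx) (x y : bool) (n k : nat) : (k <= n)%nat ->
  Phi lam x y k (n - k) =
  Cscale (/ sqrt (Nxy lam x y) * (sgn x * kron k n + sgn y * kron k 0)) (lam n).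
Proof.
  intros Hk. unfold Phi, kron.
  destruct (Nat.eqb_spec (n - k) 0), (Nat.eqb_spec k 0), (Nat.eqb_spec k n); try lia;
    try subst k; rewrite ?Nat.sub_0_r in *; try subst n; apply Cpx_ext; simpl; ring.
Qed.

Lemma bs_partial_eq (lam : nat -> Cpx) (x y : bool) (r s n k : nat) : (k <= n)%nat ->
  bs_partial lam x y r s n k =
  Cscale (sum_f_R0 (fun j => bs r s j (n - j) *
            (/ sqrt (Nxy lam x y) * (sgn x * kron j n + sgn y * kron j 0))) k) (lam n).
Proof.
  induction k as [|k IH]; intros Hk.
  - pose proof (Phi_diag lam x y n 0 Hk) as E. rewrite Nat.sub_0_r in E.
    simpl. rewrite E, Nat.sub_0_r. apply Cpx_ext; simpl; ring.
  - change (bs_partial lam x y r s n (S k)) with (Cadd (bs_partial lam x y r s n k)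
      (Cscale (bs r s (S k) (n - S k)) (Phi lam x y (S k) (n - S k)))).
    rewrite IH, Phi_diag, tech5 by lia. apply Cpx_ext; simpl; ring.
Qed.

Lemma Phi2_eq (lam : nat -> Cpx) (x y : bool) (r s : nat) :
  Phi2 lam x y r s =
  Cscale (/ sqrt (Nxy lam x y) * (bs_amp r s * Binomial.C (r + s) r)
          * (sgn x + sgn y * (-1) ^ s)) (lam (r + s)%nat).
Proof.
  rewrite Phi2_bs_partial, bs_partial_eq by lia. f_equal.
  set (n := (r + s)%nat). set (c := / sqrt (Nxy lam x y)).
  transitivity (sum_f_R0 (fun j => c * sgn x * bs r s j (n - j) * kron j n) n
              + sum_f_R0 (fun j => c * sgn y * bs r s j (n - j) * kron j 0) n).
  { rewrite <- sum_plus. apply sum_eq. intros. ring. }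
  assert (Hkron : forall i j, i <> j -> kron i j = 0).
  { intros i j Hij. unfold kron. now destruct (Nat.eqb_spec i j). }
  rewrite (sum_f_R0_single _ n n), (sum_f_R0_single _ 0 n); try lia;
    try (intros i _ Hi; rewrite Hkron by exact Hi; ring).
  unfold kron. rewrite !Nat.eqb_refl, Nat.sub_diag, Nat.sub_0_r. unfold n.
  rewrite bs_n0, bs_0n. ring.
Qed.

Lemma Phi2_dark (lam : nat -> Cpx) (x y : bool) (r s : nat) :
  Nat.even s = xorb x y -> Phi2 lam x y r s = C0.
Proof.
  intros Hs. rewrite Phi2_eq, sgn_interference_dark, Rmult_0_r by exact Hs.
  apply Cscale_0.
Qed.

Lemma Phi2_off_support (lam : nat -> Cpx) (x y : bool) (r s : nat) :
  lam (r + s)%nat = C0 -> Phi2 lam x y r s = C0.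
Proof. intros H. rewrite Phi2_eq, H. apply Cpx_ext; simpl; ring. Qed.

Lemma Cnorm2_Phi2 (lam : nat -> Cpx) (x y : bool) (r s : nat) : 0 < Nxy lam x y ->
  Cnorm2 (Phi2 lam x y r s) =
  Binomial.C (r + s) r / 2 ^ (r + s) * (2 / Nxy lam x y)
  * (1 + sgn (xorb x y) * (-1) ^ s) * Cnorm2 (lam (r + s)%nat).
Proof.
  intros HN. rewrite Phi2_eq, Cnorm2_scale.
  assert (HsN : / sqrt (Nxy lam x y) * / sqrt (Nxy lam x y) = / Nxy lam x y)
    by (rewrite <- Rinv_mult, sqrt_sqrt; lra).
  transitivity ((/ sqrt (Nxy lam x y) * / sqrt (Nxy lam x y))
    * ((bs_amp r s * Binomial.C (r + s) r) * (bs_amp r s * Binomial.C (r + s) r))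
    * ((sgn x + sgn y * (-1) ^ s) * (sgn x + sgn y * (-1) ^ s)) * Cnorm2 (lam (r + s)%nat)).
  { ring. }
  rewrite HsN, bs_amp_binom_sq, sgn_interference_sq. unfold Rdiv. ring.
Qed.

Lemma Phi2_diagonal_weight (lam : nat -> Cpx) (x y : bool) (n : nat) : 0 < Nxy lam x y ->
  sum_f_R0 (fun k => Cnorm2 (Phi2 lam x y k (n - k))) n
  = 2 / Nxy lam x y * (1 + sgn (xorb x y) * 0 ^ n) * Cnorm2 (lam n).
Proof.
  intros HN. set (c := 2 / Nxy lam x y * Cnorm2 (lam n) / 2 ^ n).
  rewrite (sum_eq _ (fun k => Binomial.C n k * 1 ^ k * 1 ^ (n - k) * c
      + Binomial.C n k * 1 ^ k * (-1) ^ (n - k) * (c * sgn (xorb x y)))).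
  2:{ intros k Hk. rewrite Cnorm2_Phi2 by exact HN. replace (k + (n - k))%nat with n by lia.
      rewrite !pow1. unfold c, Rdiv. ring. }
  rewrite sum_plus, <- !scal_sum, <- !binomial.
  replace (1 + 1) with 2 by ring. replace (1 + -1) with 0 by ring.
  assert (H2n : 0 < 2 ^ n) by (apply pow_lt; lra).
  unfold c. destruct n as [|m].
  - simpl. field. lra.
  - rewrite pow_i by lia. set (t := 2 ^ S m) in *. field. lra.
Qed.

Lemma Phi2_normalized (lam : nat -> Cpx) (x y : bool) :
  normalized lam -> 0 < Nxy lam x y ->
  infinite_sum (fun n => sum_f_R0 (fun k => Cnorm2 (Phi2 lam x y k (n - k))) n) 1.
Proof.
  intros Hlam HN. apply is_series_Reals. apply is_series_Reals in Hlam.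
  set (c := 2 / Nxy lam x y).
  set (d := c * sgn (xorb x y) * Cnorm2 (lam 0%nat)).
  assert (Hvac : is_series (fun n => 0 ^ n) 1).
  { replace 1 with (/ (1 - 0)) by (rewrite Rminus_0_r; apply Rinv_1).
    apply is_series_geom. rewrite Rabs_R0. lra. }
  pose proof (@is_series_plus R_AbsRing R_NormedModule _ _ _ _
    (@is_series_scal_l R_AbsRing R_NormedModule c _ _ Hlam)
    (@is_series_scal_l R_AbsRing R_NormedModule d _ _ Hvac)) as Hsum.
  replace 1 with (c * 1 + d * 1) by (unfold d, c, Nxy in *; field; lra).
  apply (is_series_ext _ _ _ ) with (2 := Hsum). intros n.
  change (c * Cnorm2 (lam n) + d * 0 ^ n
          = sum_f_R0 (fun k => Cnorm2 (Phi2 lam x y k (n - k))) n).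
  rewrite Phi2_diagonal_weight by exact HN. fold c. unfold d.
  destruct n as [|n]; [simpl; ring | rewrite pow_i by lia; ring].
Qed.

Lemma prob_certain (lam : nat -> Cpx) (MA MB : fock_meas) (a b x y : bool) :
  normalized lam -> 0 < Nxy lam x y ->
  (forall k m, (MA a k && MB b m)%bool = false -> Phi2 lam x y k m = C0) ->
  prob lam MA MB a b x y 1.
Proof.
  intros Hlam HN Hrej. unfold prob. apply is_series_Reals.
  apply (is_series_ext (fun n => sum_f_R0 (fun k => Cnorm2 (Phi2 lam x y k (n - k))) n)).
  - intros n. apply sum_eq. intros k _.
    destruct (MA a k && MB b (n - k)%nat)%bool eqn:Hk; [reflexivity|].
    now rewrite Hrej, Cnorm2_C0.
  - apply is_series_Reals. now apply Phi2_normalized.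
Qed.

Lemma J_value_of_probs (lam : nat -> Cpx) (MA MB : fock_meas) :
  (forall x y : bool, prob lam MA MB (xorb x y) (xorb x y) x y 1) -> J_value lam MA MB 1.
Proof.
  intros P. exists 1, 1, 1, 1.
  split; [exact (P false false)|]. split; [exact (P true true)|].
  split; [exact (P false true)|]. split; [exact (P true false)|]. field.
Qed.

Lemma prob_even_support (lam : nat -> Cpx) :
  normalized lam -> Cnorm2 (lam 0%nat) < 1 ->
  (forall n, Nat.odd n = true -> lam n = C0) ->
  forall x y : bool, prob lam meas_even_odd meas_even_odd (xorb x y) (xorb x y) x y 1.
Proof.
  intros Hlam H0 Hodd x y. apply prob_certain; [exact Hlam | now apply Nxy_pos |].
  intros k m Hrej. destruct (Nat.even (k + m)) eqn:Hkm.
  - apply Phi2_dark. rewrite Nat.even_add in Hkm.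
    unfold meas_even_odd, P_even, P_odd, Nat.odd in Hrej.
    destruct (xorb x y), (Nat.even k), (Nat.even m); simpl in *; congruence.
  - apply Phi2_off_support, Hodd. unfold Nat.odd. now rewrite Hkm.
Qed.

Lemma prob_odd_support (lam : nat -> Cpx) :
  normalized lam -> Cnorm2 (lam 0%nat) < 1 ->
  (forall n, Nat.even n = true -> lam n = C0) ->
  forall x y : bool, prob lam meas_odd_even meas_even_odd (xorb x y) (xorb x y) x y 1.
Proof.
  intros Hlam H0 Heven x y. apply prob_certain; [exact Hlam | now apply Nxy_pos |].
  intros k m Hrej. destruct (Nat.even (k + m)) eqn:Hkm.
  - now apply Phi2_off_support, Heven.
  - apply Phi2_dark. rewrite Nat.even_add in Hkm.
    unfold meas_even_odd, meas_odd_even, P_even, P_odd, Nat.odd in Hrej.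
    destruct (xorb x y), (Nat.even k), (Nat.even m); simpl in *; congruence.
Qed.

Lemma coh_add_opp (alpha : Cpx) (n : nat) :
  Cadd (coh alpha n) (coh (Copp alpha) n) =
  Cscale (exp (- Cnorm2 alpha / 2) / sqrt (INR (fact n)) * (1 + (-1) ^ n)) (Cpow alpha n).
Proof. unfold coh. rewrite Cpow_opp, Cnorm2_opp. apply Cpx_ext; simpl; ring. Qed.

Lemma coh_sub_opp (alpha : Cpx) (n : nat) :
  Cadd (coh alpha n) (Copp (coh (Copp alpha) n)) =
  Cscale (exp (- Cnorm2 alpha / 2) / sqrt (INR (fact n)) * (1 - (-1) ^ n)) (Cpow alpha n).
Proof. unfold coh. rewrite Cpow_opp, Cnorm2_opp. apply Cpx_ext; simpl; ring. Qed.

Lemma even_cat_J (alpha c : Cpx) (lam : nat -> Cpx) :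
  alpha <> C0 ->
  (forall n, lam n = Cmul c (Cadd (coh alpha n) (coh (Copp alpha) n))) ->
  normalized lam ->
  J_value lam meas_even_odd meas_even_odd 1.
Proof.
  intros Halpha Hl Hlam.
  assert (Hcat : forall n, lam n = Cmul c
     (Cscale (exp (- Cnorm2 alpha / 2) / sqrt (INR (fact n)) * (1 + (-1) ^ n)) (Cpow alpha n)))
    by (intros n; now rewrite Hl, coh_add_opp).
  apply J_value_of_probs, prob_even_support; [exact Hlam | | ].
  - (* [|lam 2|^2 = |alpha|^4 |lam 0|^2 / 2], so [lam 0] cannot carry the whole norm *)
    assert (H02 : 2 * Cnorm2 (lam 2%nat) = Cnorm2 alpha * Cnorm2 alpha * Cnorm2 (lam 0%nat)).
    { rewrite !Hcat, !Cnorm2_mul, !Cnorm2_scale, !Cnorm2_pow.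
      replace (INR (fact 2)) with 2 by (simpl; ring).
      replace (INR (fact 0)) with 1 by reflexivity. rewrite sqrt_1.
      assert (S2 : / sqrt 2 * / sqrt 2 = / 2) by (rewrite <- Rinv_mult, sqrt_sqrt; lra).
      set (e := exp (- Cnorm2 alpha / 2)).
      simpl. unfold Rdiv. rewrite Rinv_1.
      transitivity (8 * Cnorm2 c * e * e * (/ sqrt 2 * / sqrt 2)
                    * (Cnorm2 alpha * Cnorm2 alpha)); [ring|].
      rewrite S2. field. }
    pose proof (infinite_sum_partial_le _ _ 2 (fun n => Cnorm2_ge0 (lam n)) Hlam) as Hle.
    simpl in Hle. pose proof (Cnorm2_gt0 _ Halpha).
    pose proof (Cnorm2_ge0 (lam 0%nat)). pose proof (Cnorm2_ge0 (lam 1%nat)).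
    assert (0 < Cnorm2 alpha * Cnorm2 alpha) by nra. nra.
  - intros n Hodd. rewrite Hcat, pow_m1_parity, <- Nat.negb_odd, Hodd.
    apply Cpx_ext; simpl; ring.
Qed.

Lemma odd_cat_J (alpha c : Cpx) (lam : nat -> Cpx) :
  alpha <> C0 ->
  (forall n, lam n = Cmul c (Cadd (coh alpha n) (Copp (coh (Copp alpha) n)))) ->
  normalized lam ->
  J_value lam meas_odd_even meas_even_odd 1.
Proof.
  intros Halpha Hl Hlam.
  assert (Heven : forall n, Nat.even n = true -> lam n = C0).
  { intros n He. rewrite Hl, coh_sub_opp, pow_m1_parity, He. apply Cpx_ext; simpl; ring. }
  apply J_value_of_probs, prob_odd_support; [exact Hlam | | exact Heven].
  rewrite (Heven 0%nat eq_refl), Cnorm2_C0. lra.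
Qed.

(* [cbw l = C(2l, l) / 4^l], in the form in which it appears in [sqz]. *)
Definition cbw (l : nat) : R :=
  INR (fact (2 * l)) / ((2 ^ l * INR (fact l)) * (2 ^ l * INR (fact l))).

Lemma cbw_0 : cbw 0 = 1.
Proof. unfold cbw. simpl. field. Qed.

Lemma cbw_S (l : nat) : cbw (S l) * (2 * INR l + 2) = cbw l * (2 * INR l + 1).
Proof.
  unfold cbw. replace (2 * S l)%nat with (S (S (2 * l))) by lia.
  rewrite !fact_simpl, !mult_INR, !S_INR, mult_INR. simpl pow.
  pose proof (INR_fact_neq_0 l). pose proof (INR_fact_neq_0 (2 * l)).
  assert (0 < 2 ^ l) by (apply pow_lt; lra). pose proof (pos_INR l).
  replace (INR 2) with 2 by (simpl; ring). set (q := 2 ^ l) in *. field. repeat split; lra.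
Qed.

Lemma cbw_bounds (l : nat) : 0 <= cbw l <= 1.
Proof.
  induction l as [|l IH]; [rewrite cbw_0; lra|].
  pose proof (cbw_S l). pose proof (pos_INR l). split; nra.
Qed.

(* With [c n] the convolution and [T n] its first moment, the symmetry [k <-> n - k] gives
   [2 T n = n c n] while [cbw_S] gives [T (n + 1) = T n + c n / 2]; together
   [(n + 1) c (n + 1) = (n + 1) c n]. *)
Lemma cbw_convolution (n : nat) : sum_f_R0 (fun k => cbw k * cbw (n - k)) n = 1.
Proof.
  set (c := fun n => sum_f_R0 (fun k => cbw k * cbw (n - k)) n).
  set (T := fun n => sum_f_R0 (fun k => INR k * cbw k * cbw (n - k)) n).
  assert (Hsym : forall n, 2 * T n = INR n * c n).
  { intros m. unfold T, c.
    assert (E : sum_f_R0 (fun k => INR k * cbw k * cbw (m - k)) m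
              = sum_f_R0 (fun k => (INR m - INR k) * cbw k * cbw (m - k)) m).
    { rewrite sum_f_R0_rev. apply sum_eq. intros i Hi.
      rewrite minus_INR by exact Hi. replace (m - (m - i))%nat with i by lia. ring. }
    rewrite Rmult_comm, scal_sum.
    transitivity (sum_f_R0 (fun k => INR k * cbw k * cbw (m - k)) m
      + sum_f_R0 (fun k => (INR m - INR k) * cbw k * cbw (m - k)) m); [rewrite <- E; ring|].
    rewrite <- sum_plus. apply sum_eq. intros. ring. }
  assert (Hstep : forall n, T (S n) = T n + c n / 2).
  { intros m. unfold T, c. rewrite decomp_sum by lia. simpl pred.
    rewrite Rmult_0_l, Rmult_0_l, Rplus_0_l.
    unfold Rdiv. rewrite Rmult_comm, scal_sum, <- sum_plus.
    apply sum_eq. intros i Hi. replace (S m - S i)%nat with (m - i)%nat by lia.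
    rewrite S_INR.
    replace ((INR i + 1) * cbw (S i) * cbw (m - i)) with
      (cbw (S i) * (2 * INR i + 2) * cbw (m - i) / 2) by (unfold Rdiv; field).
    rewrite cbw_S. unfold Rdiv. field. }
  change (c n = 1). induction n as [|n IH].
  - unfold c. simpl. rewrite cbw_0. ring.
  - pose proof (Hsym (S n)) as H1. rewrite Hstep, S_INR in H1.
    pose proof (Hsym n). pose proof (pos_INR n).
    assert (Hfac : (INR n + 1) * (c (S n) - 1) = 0) by (rewrite IH in *; lra).
    apply Rmult_integral in Hfac. destruct Hfac; lra.
Qed.

Lemma cbw_series (t : R) : 0 <= t < 1 ->
  is_series (fun l => cbw l * t ^ l) (/ sqrt (1 - t)).
Proof.
  intros Ht.
  assert (Hpos : forall l, 0 <= cbw l * t ^ l)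
    by (intros l; apply Rmult_le_pos; [apply cbw_bounds | apply pow_le; lra]).
  assert (Hex : ex_series (fun l => cbw l * t ^ l)).
  { apply (@ex_series_le R_AbsRing R_CompleteNormedModule _ (fun l => t ^ l)).
    - intros l. change (norm (cbw l * t ^ l)) with (Rabs (cbw l * t ^ l)).
      rewrite Rabs_right by (apply Rle_ge, Hpos).
      pose proof (cbw_bounds l). pose proof (pow_le t l (proj1 Ht)). nra.
    - apply ex_series_geom. rewrite Rabs_right; lra. }
  set (f := Series (fun l => cbw l * t ^ l)).
  pose proof (Series_correct _ Hex) as Hf. fold f in Hf.
  assert (Hff : f * f = / (1 - t)).
  { pose proof (is_series_mult_pos _ _ _ _ Hf Hf Hpos Hpos) as Hm.
    rewrite <- (is_series_unique _ _ (is_series_geom t ltac:(rewrite Rabs_right; lra))).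
    symmetry. apply is_series_unique.
    apply (is_series_ext _ _ _) with (2 := Hm). intros n.
    rewrite (sum_eq _ (fun k => cbw k * cbw (n - k) * t ^ n)).
    - rewrite <- scal_sum, cbw_convolution. apply Rmult_1_r.
    - intros k Hk. replace (t ^ n) with (t ^ k * t ^ (n - k)) by (rewrite <- pow_add; f_equal; lia).
      ring. }
  assert (Hf1 : 1 <= f).
  { pose proof (infinite_sum_partial_le _ _ 0 Hpos (proj1 (is_series_Reals _ _) Hf)) as H.
    simpl in H. rewrite cbw_0 in H. lra. }
  replace (/ sqrt (1 - t)) with f; [exact Hf|].
  rewrite <- sqrt_inv, <- Hff, sqrt_square; lra.
Qed.

Lemma sum_f_R0_even_support (g b : nat -> R) :
  (forall l, g (2 * l)%nat = b l) -> (forall l, g (S (2 * l)) = 0) ->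
  forall l, sum_f_R0 g (2 * l) = sum_f_R0 b l /\ sum_f_R0 g (S (2 * l)) = sum_f_R0 b l.
Proof.
  intros Heven Hodd. induction l as [|l [IH1 IH2]].
  - pose proof (Heven 0%nat) as H0. pose proof (Hodd 0%nat) as H1. simpl in *.
    rewrite H0, H1. split; ring.
  - assert (E : sum_f_R0 g (2 * S l) = sum_f_R0 b (S l)).
    { replace (2 * S l)%nat with (S (S (2 * l))) by lia.
      rewrite tech5, IH2. change (sum_f_R0 b (S l)) with (sum_f_R0 b l + b (S l)).
      rewrite <- Heven. do 3 f_equal. lia. }
    split; [exact E|]. rewrite tech5, Hodd, E. ring.
Qed.

Lemma infinite_sum_even_support (g b : nat -> R) (L : R) :
  (forall l, g (2 * l)%nat = b l) -> (forall l, g (S (2 * l)) = 0) ->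
  infinite_sum b L -> infinite_sum g L.
Proof.
  intros Heven Hodd Hb eps Heps. destruct (Hb eps Heps) as [M HM].
  exists (2 * M)%nat. intros n Hn.
  pose proof (sum_f_R0_even_support g b Heven Hodd) as Hsum.
  destruct (Nat.Even_or_Odd n) as [[l ->]|[l ->]].
  - rewrite (proj1 (Hsum l)). apply HM. lia.
  - rewrite Nat.add_1_r, (proj2 (Hsum l)). apply HM. lia.
Qed.

Lemma cosh_gt_1 (r : R) : 0 < r -> 1 < cosh r.
Proof.
  intros Hr. unfold cosh.
  assert (1 < exp r) by (rewrite <- exp_0; now apply exp_increasing).
  assert (exp r * exp (- r) = 1) by (rewrite <- exp_plus, Rplus_opp_r; apply exp_0).
  pose proof (exp_pos (- r)). nra.
Qed.

Lemma one_minus_tanh_sq (r : R) : 1 - tanh r * tanh r = / (cosh r * cosh r).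
Proof.
  assert (Hch : 0 < cosh r) by (unfold cosh; pose proof (exp_pos r); pose proof (exp_pos (- r)); lra).
  assert (Hcs : cosh r * cosh r - sinh r * sinh r = 1).
  { assert (Huv : exp r * exp (- r) = 1)
      by (rewrite <- exp_plus, Rplus_opp_r; apply exp_0).
    unfold cosh, sinh. rewrite <- Huv. field. }
  unfold tanh.
  replace (1 - sinh r / cosh r * (sinh r / cosh r))
    with ((cosh r * cosh r - sinh r * sinh r) / (cosh r * cosh r)) by (field; lra).
  rewrite Hcs. field. lra.
Qed.

Section SqueezedVacuum.

Variable zeta : Cpx.
Hypothesis zeta_neq0 : zeta <> C0.

Let r := Cabs zeta.
Let tau := tanh r * tanh r.

Lemma sqz_r_pos : 0 < r.
Proof. unfold r, Cabs. apply sqrt_lt_R0, Cnorm2_gt0, zeta_neq0. Qed.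

Lemma sqz_even (l : nat) : Cnorm2 (sqz zeta (2 * l)) = / cosh r * (cbw l * tau ^ l).
Proof.
  pose proof sqz_r_pos as Hr. pose proof (cosh_gt_1 r Hr) as Hch.
  assert (Hr2 : r * r = Cnorm2 zeta) by (apply sqrt_sqrt, Cnorm2_ge0).
  unfold sqz. fold r.
  replace (Nat.even (2 * l)) with true by (symmetry; apply Nat.even_spec; now exists l).
  rewrite Nat.div2_double, Cnorm2_scale, Cnorm2_pow, Cnorm2_scale, <- Hr2.
  replace (- tanh r / r * (- tanh r / r) * (r * r)) with tau by (unfold tau; field; lra).
  unfold cbw.
  assert (Hs1 : sqrt (cosh r) * sqrt (cosh r) = cosh r) by (apply sqrt_sqrt; lra).
  assert (Hs2 : sqrt (INR (fact (2 * l))) * sqrt (INR (fact (2 * l))) = INR (fact (2 * l)))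
    by (apply sqrt_sqrt, pos_INR).
  assert (0 < sqrt (cosh r)) by (apply sqrt_lt_R0; lra).
  assert (0 < 2 ^ l) by (apply pow_lt; lra).
  pose proof (INR_fact_neq_0 l).
  set (q := 2 ^ l) in *. set (s1 := sqrt (cosh r)) in *.
  set (s2 := sqrt (INR (fact (2 * l)))) in *. set (T := tau ^ l).
  rewrite <- Hs1 at 1. rewrite <- Hs2. field. repeat split; lra.
Qed.

Lemma sqz_odd (l : nat) : Cnorm2 (sqz zeta (S (2 * l))) = 0.
Proof.
  unfold sqz. replace (Nat.even (S (2 * l))) with false.
  - apply Cnorm2_C0.
  - now rewrite Nat.even_succ, Nat.odd_mul, Nat.odd_2.
Qed.

Lemma sqz_normalized : normalized (sqz zeta).
Proof.
  pose proof (cosh_gt_1 r sqz_r_pos) as Hch.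
  apply (infinite_sum_even_support _ (fun l => / cosh r * (cbw l * tau ^ l)));
    [exact sqz_even | exact sqz_odd |].
  replace 1 with (/ cosh r * / sqrt (1 - tau)).
  - apply is_series_Reals, (@is_series_scal_l R_AbsRing R_NormedModule), cbw_series.
    pose proof (one_minus_tanh_sq r) as Htanh. fold tau in Htanh.
    assert (0 < / (cosh r * cosh r)) by (apply Rinv_0_lt_compat; nra).
    split; [unfold tau; nra | lra].
  - unfold tau. rewrite one_minus_tanh_sq, sqrt_inv, sqrt_square by lra. field. lra.
Qed.

Lemma sqz_J : J_value (sqz zeta) meas_even_odd meas_even_odd 1.
Proof.
  pose proof (cosh_gt_1 r sqz_r_pos) as Hch.
  apply J_value_of_probs, prob_even_support; [exact sqz_normalized | |].
  - pose proof (sqz_even 0) as E. simpl in E. rewrite cbw_0, Rmult_1_l, Rmult_1_r in E.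
    rewrite E, <- Rinv_1. apply Rinv_lt_contravar; lra.
  - intros n Hn. unfold sqz. now rewrite <- Nat.negb_odd, Hn.
Qed.

End SqueezedVacuum.
Theorem mainTheorem3 :
  (* (i) only even Fock components *)
  (forall lam : nat -> Cpx,
     normalized lam -> Cnorm2 (lam 0%nat) < 1 ->
     (forall n, Nat.odd n = true -> lam n = C0) ->
     (forall x y : bool,
        prob lam meas_even_odd meas_even_odd (xorb x y) (xorb x y) x y 1) /\
     prob lam meas_even_odd meas_even_odd false false false false 1 /\
     prob lam meas_even_odd meas_even_odd false false true true 1 /\
     prob lam meas_even_odd meas_even_odd true true false true 1 /\
     prob lam meas_even_odd meas_even_odd true true true false 1 /\
     J_value lam meas_even_odd meas_even_odd 1) /\
  (* (ii) only odd Fock components *)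
  (forall lam : nat -> Cpx,
     normalized lam -> Cnorm2 (lam 0%nat) < 1 ->
     (forall n, Nat.even n = true -> lam n = C0) ->
     J_value lam meas_odd_even meas_even_odd 1) /\
  (* even coherent state  xi ∝ |alpha> + |-alpha> *)
  (forall (alpha c : Cpx) (lam : nat -> Cpx),
     alpha <> C0 ->
     (forall n, lam n = Cmul c (Cadd (coh alpha n) (coh (Copp alpha) n))) ->
     normalized lam ->
     J_value lam meas_even_odd meas_even_odd 1) /\
  (* odd coherent state  xi ∝ |alpha> - |-alpha> *)
  (forall (alpha c : Cpx) (lam : nat -> Cpx),
     alpha <> C0 ->
     (forall n, lam n = Cmul c (Cadd (coh alpha n) (Copp (coh (Copp alpha) n)))) ->
     normalized lam ->
     J_value lam meas_odd_even meas_even_odd 1) /\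
  (* squeezed vacuum *)
  (forall zeta : Cpx, zeta <> C0 ->
     J_value (sqz zeta) meas_even_odd meas_even_odd 1).
Proof.
  split; [|split; [|split; [|split]]].
  - intros lam Hlam H0 Hodd.
    pose proof (prob_even_support lam Hlam H0 Hodd) as P.
    repeat split; [exact P | exact (P false false) | exact (P true true)
                  | exact (P false true) | exact (P true false)
                  | exact (J_value_of_probs _ _ _ P)].
  - intros lam Hlam H0 Heven.
    exact (J_value_of_probs _ _ _ (prob_odd_support lam Hlam H0 Heven)).
  - exact even_cat_J.
  - exact odd_cat_J.
  - exact sqz_J.
Qed.
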